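(* Let $\mathfrak g$ be a finite-dimensional nilpotent Lie algebra over a field $k$ of characteristic zero, and let $x\cdot y$ be an LR-structure on $\mathfrak g$. Then there exists a complete LR-structure $x\circ y$ on $\mathfrak g$ such that $\mathfrak g\circ\mathfrak g\subseteq \mathfrak g\cdot\mathfrak g$, where $\mathfrak g\circ\mathfrak g$ and $\mathfrak g\cdot\mathfrak g$ denote the linear spans of all products $x\circ y$, respectively $x\cdot y$, with $x,y\in\mathfrak g$.
   Context: An LR-algebra is a vector space $A$ with a bilinear product $\cdot$ satisfying $x\cdot(y\cdot z)=y\cdot(x\cdot z)$ and $(x\cdot y)\cdot z=(x\cdot z)\cdot y$ for all $x,y,z\in A$. An LR-structure on a Lie algebra $\mathfrak g$ is an LR-algebra product on the underlying vector space of $\mathfrak g$ such that $x\cdot y-y\cdot x=[x,y]$ for all $x,y$. An LR-structure is complete if all right multiplications $R(x)\colon y\mapsto y\cdot x$ are nilpotent. *)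

From HB Require Import structures.
From mathcomp Require Import all_boot all_order all_algebra.
Set Implicit Arguments. Unset Strict Implicit. Unset Printing Implicit Defensive.
Import GRing.Theory.
Local Open Scope ring_scope.

Section LR.
Variables (F : fieldType) (V : vectType F).

Definition bilinear_prod (m : V -> V -> V) : Prop :=
  (forall (a : F) (x y z : V), m (a *: x + y) z = a *: m x z + m y z) /\
  (forall (a : F) (x y z : V), m z (a *: x + y) = a *: m z x + m z y).

Definition is_lie_bracket (br : V -> V -> V) : Prop :=
  [/\ bilinear_prod br,
      (forall x, br x x = 0) &
      (forall x y z, br x (br y z) + br y (br z x) + br z (br x y) = 0)].

Definition in_prod_span (m : V -> V -> V) (v : V) : Prop :=
  exists (n : nat) (a : 'I_n -> F) (x y : 'I_n -> V),
    v = \sum_(i < n) a i *: m (x i) (y i).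

Fixpoint in_lcs (br : V -> V -> V) (i : nat) (v : V) : Prop :=
  match i with
  | 0 => True
  | j.+1 => exists (n : nat) (a : 'I_n -> F) (x y : 'I_n -> V),
      (forall k, in_lcs br j (y k)) /\
      v = \sum_(k < n) a k *: br (x k) (y k)
  end.

Definition lie_nilpotent (br : V -> V -> V) : Prop :=
  exists i, forall v, in_lcs br i v -> v = 0.

Definition is_LR_algebra (m : V -> V -> V) : Prop :=
  [/\ bilinear_prod m,
      (forall x y z, m x (m y z) = m y (m x z)) &
      (forall x y z, m (m x y) z = m (m x z) y)].

Definition is_LR_structure (br : V -> V -> V) (m : V -> V -> V) : Prop :=
  is_LR_algebra m /\ (forall x y, m x y - m y x = br x y).

Definition LR_complete (m : V -> V -> V) : Prop :=
  forall x, exists n, forall y, iter n (fun z => m z x) y = 0.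

End LR.

From HB Require Import structures.
From mathcomp Require Import all_boot all_order all_algebra.
From Stdlib Require Import Classical ClassicalEpsilon.
Import GRing.Theory.
Local Open Scope ring_scope.
Set Implicit Arguments. Unset Strict Implicit.

(* Fix an LR-product m on V whose commutator br is nilpotent.  Call a product
   c on a subspace U a complete companion of m on U if c is a complete
   LR-product on U, has the same commutator as m on U, and all its products
   lie in the span of m(U, U).  By strong induction on the dimension, every
   m-subalgebra U has a complete companion:
   - if every right multiplication R(e) : z |-> m z e with e in U is nilpotent
     on U, then m itself is a companion;
   - otherwise some T = R(e) is not nilpotent on U, and its Fitting
     decomposition U = K (+) I (K = ker T^N, I = im T^N, N = dim U) satisfies
     K.U <= K, I.U <= I, K.I = 0, m is commutative on I, and for y in K the map
     R(y) acts on I as -ad y, hence nilpotently.  K is a proper subalgebra, so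
     it has a companion cK, and gluing it with m along the decomposition,
         c (x, y) = cK (x_K, y_K) + m (x_I, y_K),
     gives a companion on U.
   The theorem is the case U = V. *)

Section LinearFunctions.
Variables (F : fieldType) (V : vectType F).

(* Linearity of a plain function, the form in which the LR axioms provide it. *)
Definition linear_fun (g : V -> V) : Prop :=
  forall (a : F) (x y : V), g (a *: x + y) = a *: g x + g y.

Section Packed.
Variables (g : V -> V) (lin_g : linear_fun g).

Definition pack_linear : {linear V -> V} :=
  HB.pack g (GRing.isLinear.Build F V V *:%R g lin_g).

Lemma linfun_funE : linfun g =1 g.
Proof. exact: (lfunE pack_linear). Qed.

Lemma lin_fun0 : g 0 = 0.
Proof. exact: (linear0 pack_linear). Qed.

Lemma lin_funD x y : g (x + y) = g x + g y.
Proof. exact: (linearD pack_linear). Qed.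

Lemma lin_funB x y : g (x - y) = g x - g y.
Proof. exact: (linearB pack_linear). Qed.

Lemma lin_funZ a x : g (a *: x) = a *: g x.
Proof. exact: (linearZZ pack_linear). Qed.

Lemma lin_fun_sum n (f : 'I_n -> V) : g (\sum_(i < n) f i) = \sum_(i < n) g (f i).
Proof. exact: (linear_sum pack_linear). Qed.

End Packed.

Lemma lin_fun_iter g : linear_fun g -> forall n, linear_fun (iter n g).
Proof. by move=> lin_g; elim=> [|n IH] a x y //=; rewrite IH lin_g. Qed.

Lemma dimv_lt_sub (A B : {vspace V}) :
  (A <= B)%VS -> ~~ (B <= A)%VS -> (\dim A < \dim B)%N.
Proof.
move=> sAB nBA; rewrite (ltn_leqif (dimv_leqif_eq sAB)).
by apply: contra nBA => /eqP ->; exact: subvv.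
Qed.

End LinearFunctions.

Section Companions.
Variables (F : fieldType) (V : vectType F) (br m : V -> V -> V).
Hypotheses (hm : is_LR_structure br m) (hnil : lie_nilpotent br).

Let mL z : linear_fun (fun x => m x z).
Proof. by case: hm => -[[hl _] _ _] _ a x y; exact: hl. Qed.

Let mR z : linear_fun (m z).
Proof. by case: hm => -[[_ hr] _ _] _ a x y; exact: hr. Qed.

Let lcomm x y z : m x (m y z) = m y (m x z).
Proof. by case: hm => -[_ hl _] _; exact: hl. Qed.

Let rcomm x y z : m (m x y) z = m (m x z) y.
Proof. by case: hm => -[_ _ hr] _; exact: hr. Qed.

Let hbr x y : m x y - m y x = br x y.
Proof. by case: hm. Qed.

(* The iterates of -ad y vanish from a uniform exponent on: this is how the
   nilpotency of the commutator enters the proof. *)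
Lemma ad_iter_nil : exists k, forall y v j, (k <= j)%N ->
  iter j (fun w => - br y w) v = 0.
Proof.
case: hnil => k hk; exists k => y v j hj.
rewrite -(subnKC hj) iterD; apply: hk.
clear hj; elim: k (iter (j - k) _ v) => [|k IH] w //=.
exists 1%N, (fun=> -1), (fun=> y), (fun=> iter k (fun w => - br y w) w).
by split => //; rewrite big_ord1 scaleN1r.
Qed.

Definition subalgebra (U : {vspace V}) : Prop :=
  forall x y, x \in U -> y \in U -> m x y \in U.

Definition in_span_on (U : {vspace V}) (v : V) : Prop :=
  exists n (a : 'I_n -> F) (x y : 'I_n -> V),
    [/\ forall i, x i \in U, forall i, y i \in U & v = \sum_(i < n) a i *: m (x i) (y i)].

Lemma span_on_prod (U : {vspace V}) x y : x \in U -> y \in U -> in_span_on U (m x y).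
Proof.
move=> hx hy; exists 1%N, (fun=> 1), (fun=> x), (fun=> y).
by split => //; rewrite big_ord1 scale1r.
Qed.

Lemma span_on_add (U : {vspace V}) u v :
  in_span_on U u -> in_span_on U v -> in_span_on U (u + v).
Proof.
case=> n [a [x [y [hx hy ->]]]]; case=> n' [a' [x' [y' [hx' hy' ->]]]].
pose f (T : Type) (g : 'I_n -> T) (g' : 'I_n' -> T) (i : 'I_(n + n')) :=
  match split i with inl j => g j | inr j => g' j end.
exists (n + n')%N, (f _ a a'), (f _ x x'), (f _ y y'); split.
- by move=> i; rewrite /f; case: (split i).
- by move=> i; rewrite /f; case: (split i).
rewrite big_split_ord /=; congr (_ + _); apply: eq_bigr => i _;
  by rewrite /f (unsplitK (inl _ i), unsplitK (inr _ i)).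
Qed.

Lemma span_on_sub (K U : {vspace V}) v :
  (K <= U)%VS -> in_span_on K v -> in_span_on U v.
Proof.
move=> /subvP sKU [n [a [x [y [hx hy ->]]]]].
by exists n, a, x, y; split => // i; exact: sKU.
Qed.

Lemma span_on_annihilated (U : {vspace V}) x v :
  (forall u w, u \in U -> w \in U -> m x (m u w) = 0) ->
  in_span_on U v -> m x v = 0.
Proof.
move=> hx [n [a [u [w [hu hw ->]]]]]; rewrite (lin_fun_sum (mR x)) big1 // => i _.
by rewrite (lin_funZ (mR x)) hx ?scaler0.
Qed.

Record companion (U : {vspace V}) (c : V -> V -> V) : Prop := Companion {
  cp_in : forall x y, x \in U -> y \in U -> c x y \in U;
  cp_span : forall x y, x \in U -> y \in U -> in_span_on U (c x y);
  cp_linl : forall a x y z, x \in U -> y \in U -> z \in U ->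
    c (a *: x + y) z = a *: c x z + c y z;
  cp_linr : forall a x y z, x \in U -> y \in U -> z \in U ->
    c z (a *: x + y) = a *: c z x + c z y;
  cp_lcomm : forall x y z, x \in U -> y \in U -> z \in U -> c x (c y z) = c y (c x z);
  cp_rcomm : forall x y z, x \in U -> y \in U -> z \in U -> c (c x y) z = c (c x z) y;
  cp_comm : forall x y, x \in U -> y \in U -> c x y - c y x = m x y - m y x;
  cp_complete : forall y, y \in U -> exists k, forall j x, (k <= j)%N -> x \in U ->
    iter j (fun z => c z y) x = 0 }.

Lemma self_companion (U : {vspace V}) : subalgebra U ->
  (forall e x, e \in U -> x \in U -> iter (\dim U) (fun z => m z e) x = 0) ->
  companion U m.
Proof.
move=> hU hR; split => //.
- exact: span_on_prod.
- by move=> a x y z *; apply: mL.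
- by move=> a x y z *; apply: mR.
move=> y hy; exists (\dim U) => j x hj hx.
rewrite -(subnK hj) iterD hR //.
by elim: (j - _)%N => //= k ->; exact: (lin_fun0 (mL y)).
Qed.

Section Fitting.
Variables (U : {vspace V}) (e : V).
Hypotheses (hU : subalgebra U) (he : e \in U).

(* T is the right multiplication by e; N = dim U bounds the image chain. *)
Let T := fun z => m z e.
Let N := \dim U.
Let linT j : linear_fun (iter j T) := lin_fun_iter (mL e) j.

Lemma iterT_in j z : z \in U -> iter j T z \in U.
Proof. by move=> hz; elim: j => //= j IH; exact: hU. Qed.

(* T commutes with every right multiplication, by right commutativity. *)
Lemma iterT_mul j a b : iter j T (m a b) = m (iter j T a) b.
Proof. by elim: j => //= j ->; rewrite /T rcomm. Qed.

Definition fit_img j := (linfun (iter j T) @: U)%VS.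

Lemma fit_imgP j w : reflect (exists2 u, u \in U & w = iter j T u) (w \in fit_img j).
Proof.
by apply: (iffP memv_imgP) => -[u hu hw]; exists u => //; rewrite hw linfun_funE.
Qed.

Lemma fit_img_sub j : (fit_img j <= U)%VS.
Proof. by apply/subvP => w /fit_imgP [u hu ->]; exact: iterT_in. Qed.

Lemma fit_img_decr j : (fit_img j.+1 <= fit_img j)%VS.
Proof.
apply/subvP => w /fit_imgP [u hu ->]; apply/fit_imgP.
by exists (T u); [exact: hU | rewrite iterSr].
Qed.

Lemma fit_img_stable_succ j :
  (fit_img j <= fit_img j.+1)%VS -> (fit_img j.+1 <= fit_img j.+2)%VS.
Proof.
move=> /subvP sj; apply/subvP => w /fit_imgP [u hu ->]; rewrite iterS.
have /sj /fit_imgP [u' hu' ->] : iter j T u \in fit_img j by apply/fit_imgP; exists u.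
by apply/fit_imgP; exists u' => //; rewrite iterS.
Qed.

Lemma fit_img_chain j :
  (fit_img j <= fit_img j.+1)%VS || (\dim (fit_img j.+1) + j.+1 <= N)%N.
Proof.
elim: j => [|j IH].
  case: (boolP (fit_img 0 <= fit_img 1)%VS) => //= h.
  rewrite addn1; apply: dimv_lt_sub; first exact: fit_img_sub.
  by apply: contra h => h'; apply: subv_trans h'; exact: fit_img_sub.
case/orP: IH => [h|h]; first by rewrite fit_img_stable_succ.
case: (boolP (fit_img j.+1 <= fit_img j.+2)%VS) => //= h2.
have := dimv_lt_sub (fit_img_decr j.+1) h2; rewrite -ltnS => h3.
by rewrite addnS; apply: leq_trans h; rewrite ltn_add2r.
Qed.

Lemma fit_img_stable k : (fit_img N <= fit_img (N + k))%VS.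
Proof.
have stepN k' : (fit_img (N + k') <= fit_img (N + k').+1)%VS.
  elim: k' => [|k' IH]; last by rewrite addnS; exact: fit_img_stable_succ.
  rewrite addn0; have /orP [//|] := fit_img_chain N.
  by rewrite addnS ltnNge leq_addl.
elim: k => [|k IH]; first by rewrite addn0 subvv.
by rewrite addnS; apply: subv_trans IH (stepN k).
Qed.

Definition fit_ker := (U :&: lker (linfun (iter N T)))%VS.
Definition fit_core := fit_img N.

Lemma fit_kerE w : (w \in fit_ker) = (w \in U) && (iter N T w == 0).
Proof. by rewrite memv_cap memv_ker linfun_funE. Qed.

Lemma fit_ker_in w : w \in fit_ker -> w \in U.
Proof. by rewrite fit_kerE => /andP []. Qed.

Lemma fit_core_in w : w \in fit_core -> w \in U.
Proof. exact: (subvP (fit_img_sub N)). Qed.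

(* T^N is injective on the core, which it maps onto itself. *)
Lemma fit_core_inj w : w \in fit_core -> iter N T w = 0 -> w = 0.
Proof.
move=> hw h0; set f := linfun (iter N T).
have sIfI : (fit_core <= f @: fit_core)%VS.
  apply/subvP => v /(subvP (fit_img_stable N)) /fit_imgP [u hu ->].
  by rewrite iterD -linfun_funE //; apply: memv_img; apply/fit_imgP; exists u.
have : \dim (fit_core :&: lker f) == 0%N.
  rewrite -leqn0 -(leq_add2r (\dim (f @: fit_core))) limg_ker_dim add0n.
  exact: dimvS.
rewrite dimv_eq0 => /eqP ker0.
have : w \in (fit_core :&: lker f)%VS   by rewrite memv_cap hw memv_ker (linfun_funE (linT N)) h0 eqxx.
by rewrite ker0 memv0 => /eqP.
Qed.

Lemma fit_decomp x : x \in U -> exists2 x1, x1 \in fit_core & x - x1 \in fit_ker.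
Proof.
move=> hx.
have /fit_imgP [u hu hTx] : iter N T x \in fit_img (N + N).
  by apply: (subvP (fit_img_stable N)); apply/fit_imgP; exists x.
exists (iter N T u); first by apply/fit_imgP; exists u.
by rewrite fit_kerE memvB ?iterT_in //= (lin_funB (linT N)) hTx iterD subrr.
Qed.

Lemma fit_core_T w : w \in fit_core -> exists2 w', w' \in fit_core & w = T w'.
Proof.
move=> /(subvP (fit_img_stable 1)); rewrite addn1 => /fit_imgP [u hu ->].
by exists (iter N T u); [apply/fit_imgP; exists u | rewrite iterS].
Qed.

Lemma fit_ker_mul a b : a \in fit_ker -> b \in U -> m a b \in fit_ker.
Proof.
rewrite !fit_kerE => /andP [ha /eqP h0] hb.
by rewrite hU //= iterT_mul h0 (lin_fun0 (mL b)).
Qed.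

Lemma fit_core_mul a b : a \in fit_core -> b \in U -> m a b \in fit_core.
Proof.
move=> /fit_imgP [u hu ->] hb; apply/fit_imgP.
by exists (m u b); [exact: hU | rewrite iterT_mul].
Qed.

Lemma fit_ker_subalgebra : subalgebra fit_ker.
Proof. by move=> a b ha hb; apply: fit_ker_mul ha (fit_ker_in hb). Qed.

Lemma fit_ker_core a b : a \in fit_ker -> b \in fit_core -> m a b = 0.
Proof.
move=> ha hb; have [b' hb' Eb] := fit_core_T hb.
apply: fit_core_inj.
  rewrite Eb /T lcomm; apply: fit_core_mul => //.
  by apply: hU => //; exact: fit_ker_in.
by have := fit_ker_mul ha (fit_core_in hb); rewrite fit_kerE => /andP [_ /eqP].
Qed.

(* m is commutative on the core: its elements are right multiples of e. *)
Lemma fit_core_comm a b : a \in fit_core -> b \in fit_core -> m a b = m b a.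
Proof.
move=> ha hb; have [a' _ ->] := fit_core_T ha; have [b' _ ->] := fit_core_T hb.
by rewrite /T [LHS]rcomm [in LHS]lcomm -[LHS]rcomm.
Qed.

(* For y in K, right multiplication by y acts on the core as -ad y. *)
Lemma fit_core_nil y : y \in fit_ker -> exists k, forall j a, (k <= j)%N ->
  a \in fit_core -> iter j (fun z => m z y) a = 0.
Proof.
move=> hy; have [k hk] := ad_iter_nil; exists k => j a hj ha.
suff [-> _] : iter j (fun z => m z y) a = iter j (fun w => - br y w) a /\
    iter j (fun z => m z y) a \in fit_core by exact: hk.
elim: j {hj} => [|j [IH1 IH2]] //=; split; last first.
  by apply: fit_core_mul => //; exact: fit_ker_in.
by rewrite -IH1 -hbr (fit_ker_core hy IH2) sub0r opprK.
Qed.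

Lemma fit_ker_proper x0 : x0 \in U -> iter N T x0 != 0 -> (\dim fit_ker < N)%N.
Proof.
move=> hx0 hT; apply: dimv_lt_sub; first exact: capvSl.
by apply/negP => /subvP /(_ x0 hx0); rewrite fit_kerE hx0 (negbTE hT).
Qed.

Lemma fit_proj : exists p : V -> V,
  forall x, x \in U -> p x \in fit_ker /\ x - p x \in fit_core.
Proof.
have px x : exists y, x \in U -> y \in fit_ker /\ x - y \in fit_core.
  have [hx|_] := boolP (x \in U); last by exists 0.
  have [x1 h1 h2] := fit_decomp hx; exists (x - x1) => _; split => //.
  by rewrite subKr.
exists (fun x => proj1_sig (constructive_indefinite_description _ (px x))) => x.
exact: (proj2_sig (constructive_indefinite_description _ (px x))).
Qed.

Section Glue.
Variables (p : V -> V) (cK : V -> V -> V).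
Hypothesis hp : forall x, x \in U -> p x \in fit_ker /\ x - p x \in fit_core.
Hypothesis cKc : companion fit_ker cK.

Let pK x : x \in U -> p x \in fit_ker. Proof. by move=> /hp []. Qed.
Let qI x : x \in U -> x - p x \in fit_core. Proof. by move=> /hp []. Qed.
Let pU x : x \in U -> p x \in U. Proof. by move=> /pK /fit_ker_in. Qed.

(* The projection is determined by the decomposition, hence linear. *)
Lemma proj_eq x a : x \in U -> a \in fit_ker -> x - a \in fit_core -> p x = a.
Proof.
move=> hx ha hxa; have [h1 h2] := hp hx.
apply/eqP; rewrite -subr_eq0; apply/eqP; apply: fit_core_inj.
  have -> : p x - a = (x - a) - (x - p x) by rewrite opprB [RHS]addrC addrA subrK.
  exact: memvB.
by have := memvB h1 ha; rewrite fit_kerE => /andP [_ /eqP].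
Qed.

Lemma proj_lin a x y : x \in U -> y \in U -> p (a *: x + y) = a *: p x + p y.
Proof.
move=> hx hy; apply: proj_eq; first by rewrite memvD ?memvZ.
  by rewrite memvD ?memvZ ?pK.
have -> : a *: x + y - (a *: p x + p y) = a *: (x - p x) + (y - p y).
  by rewrite scalerBr opprD addrACA.
by rewrite memvD ?memvZ ?qI.
Qed.

Lemma resid_lin a x y : x \in U -> y \in U ->
  (a *: x + y) - p (a *: x + y) = a *: (x - p x) + (y - p y).
Proof. by move=> hx hy; rewrite proj_lin // scalerBr opprD addrACA. Qed.

Definition glue x y := cK (p x) (p y) + m (x - p x) (p y).

Lemma glue_in x y : x \in U -> y \in U -> glue x y \in U.
Proof.
move=> hx hy; apply: memvD.
  by apply: fit_ker_in; apply: (cp_in cKc); exact: pK.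
by apply: hU; [exact: fit_core_in (qI hx) | exact: pU].
Qed.

Lemma proj_glue x y : x \in U -> y \in U -> p (glue x y) = cK (p x) (p y).
Proof.
move=> hx hy; apply: proj_eq; rewrite ?glue_in ?(cp_in cKc) ?pK //.
by rewrite /glue addrC addKr fit_core_mul ?qI ?pU.
Qed.

Lemma resid_glue x y : x \in U -> y \in U ->
  glue x y - p (glue x y) = m (x - p x) (p y).
Proof. by move=> hx hy; rewrite proj_glue // /glue addrC addKr. Qed.

Lemma glue_lcomm x y z : x \in U -> y \in U -> z \in U ->
  glue x (glue y z) = glue y (glue x z).
Proof.
move=> hx hy hz; rewrite /glue -/(glue y z) -/(glue x z) !proj_glue //.
have core_kills u v : u \in U -> in_span_on fit_ker v -> m (u - p u) v = 0.
  move=> hu; apply: span_on_annihilated => a b ha hb.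
  by rewrite lcomm (fit_ker_core ha (fit_core_mul (qI hu) (fit_ker_in hb))).
have sxz := cp_span cKc (pK hx) (pK hz); have syz := cp_span cKc (pK hy) (pK hz).
by rewrite !core_kills // !addr0 (cp_lcomm cKc) // pK.
Qed.

Lemma glue_rcomm x y z : x \in U -> y \in U -> z \in U ->
  glue (glue x y) z = glue (glue x z) y.
Proof.
move=> hx hy hz.
have glue2 u v w : u \in U -> v \in U ->
    glue (glue u v) w = cK (cK (p u) (p v)) (p w) + m (m (u - p u) (p v)) (p w).
  by move=> hu hv; rewrite {1}/glue resid_glue // proj_glue.
by rewrite !glue2 // rcomm (cp_rcomm cKc) // pK.
Qed.

Lemma glue_comm x y : x \in U -> y \in U -> glue x y - glue y x = m x y - m y x.
Proof.
move=> hx hy; rewrite /glue opprD addrACA (cp_comm cKc) ?pK //.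
have ha0 := pK hx; have hb0 := pK hy; have ha1 := qI hx; have hb1 := qI hy.
have ex : x = p x + (x - p x) by rewrite addrC subrK.
have ey : y = p y + (y - p y) by rewrite addrC subrK.
rewrite [in RHS]ex [in RHS]ey {ex ey}.
move: (p x) (p y) (x - p x) (y - p y) ha0 hb0 ha1 hb1 => a0 b0 a1 b1 ha0 hb0 ha1 hb1.
rewrite !(lin_funD (mL _)) !(lin_funD (mR _)) (fit_ker_core ha0 hb1).
rewrite (fit_ker_core hb0 ha1) (fit_core_comm ha1 hb1) !addr0 !addrA.
rewrite [in RHS]opprD [RHS]addrACA subrr addr0 opprD addrA.
by rewrite [m a0 b0 - _ + _]addrAC.
Qed.

Lemma glue_iter x y j : x \in U -> y \in U ->
  [/\ iter j (fun z => glue z y) x =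
        iter j (fun z => cK z (p y)) (p x) + iter j (fun z => m z (p y)) (x - p x),
      iter j (fun z => cK z (p y)) (p x) \in fit_ker &
      iter j (fun z => m z (p y)) (x - p x) \in fit_core].
Proof.
move=> hx hy; elim: j => [|j [IH hA hB]] /=.
  by split; [rewrite addrC subrK | exact: pK | exact: qI].
rewrite IH; move: (iter j _ (p x)) (iter j _ (x - p x)) hA hB => A B hA hB.
have hAB : A + B \in U by apply: memvD; [exact: fit_ker_in | exact: fit_core_in].
have pAB : p (A + B) = A by apply: proj_eq => //; rewrite addrC addKr.
rewrite /glue pAB [A + B]addrC addrK; split => //.
  exact: (cp_in cKc hA (pK hy)).
by apply: fit_core_mul => //; exact: pU.
Qed.

Lemma glue_complete y : y \in U -> exists k, forall j x, (k <= j)%N -> x \in U ->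
  iter j (fun z => glue z y) x = 0.
Proof.
move=> hy; have [k1 H1] := cp_complete cKc (pK hy).
have [k2 H2] := fit_core_nil (pK hy); exists (k1 + k2)%N => j x hj hx.
have [-> _ _] := glue_iter j hx hy.
rewrite H1 ?H2 ?addr0 ?qI ?pK //.
- exact: leq_trans (leq_addl _ _) hj.
- exact: leq_trans (leq_addr _ _) hj.
Qed.

Lemma glue_companion : companion U glue.
Proof.
split.
- exact: glue_in.
- move=> x y hx hy; apply: span_on_add; last exact: span_on_prod (fit_core_in (qI hx)) (pU hy).
  by apply: (span_on_sub (capvSl _ _)); apply: (cp_span cKc); exact: pK.
- move=> a x y z hx hy hz; rewrite /glue resid_lin // proj_lin //.
  by rewrite (cp_linl cKc) ?pK // (mL (p z)) scalerDr addrACA.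
- move=> a x y z hx hy hz; rewrite /glue proj_lin // (cp_linr cKc) ?pK //.
  by rewrite (mR (z - p z)) scalerDr addrACA.
- exact: glue_lcomm.
- exact: glue_rcomm.
- exact: glue_comm.
- exact: glue_complete.
Qed.

End Glue.
End Fitting.

Lemma companion_step (U : {vspace V}) : subalgebra U ->
  (forall K, subalgebra K -> (\dim K < \dim U)%N -> exists c, companion K c) ->
  exists c, companion U c.
Proof.
move=> hU IH.
case: (classic (exists e x0, [/\ e \in U, x0 \in U &
    iter (\dim U) (fun z => m z e) x0 != 0])) => [[e [x0 [he hx0 hT]]] | hcomplete].
  have [p hp] := fit_proj hU he.
  have [cK cKc] := IH _ (@fit_ker_subalgebra _ e hU) (fit_ker_proper hx0 hT).
  exists (glue p cK); exact (glue_companion hU he hp cKc).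
exists m; apply: (self_companion hU) => e x he hx.
apply: NNPP => hT; apply: hcomplete; exists e, x.
by split => //; apply/eqP.
Qed.

Lemma companion_exists (U : {vspace V}) : subalgebra U -> exists c, companion U c.
Proof.
have [n] := ubnP (\dim U); elim: n U => // n IHn U hdim hU.
apply: companion_step => // K hK hKU; apply: IHn => //.
exact: leq_trans hKU hdim.
Qed.

End Companions.

Theorem mainTheorem4 (F : fieldType) (V : vectType F) (br : V -> V -> V)
  (hchar : [pchar F] =i pred0)
  (hlie : is_lie_bracket br) (hnil : lie_nilpotent br)
  (dot : V -> V -> V) (hdot : is_LR_structure br dot) :
  exists circ : V -> V -> V,
    [/\ is_LR_structure br circ, LR_complete circ &
        forall x y : V, in_prod_span dot (circ x y)].
Proof.
have [c cc] := companion_exists hdot hnil (U := fullv) (fun x y _ _ => memvf _).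
have [_ commV] := hdot.
exists c; split.
- split; last by move=> x y; rewrite (cp_comm cc) ?memvf ?commV.
  split; first split.
  + by move=> a x y z; rewrite (cp_linl cc) ?memvf.
  + by move=> a x y z; rewrite (cp_linr cc) ?memvf.
  + by move=> x y z; rewrite (cp_lcomm cc) ?memvf.
  + by move=> x y z; rewrite (cp_rcomm cc) ?memvf.
- move=> y; have [k hk] := cp_complete cc (memvf y).
  by exists k => x; apply: hk; rewrite ?memvf.
- move=> x y; have [n [a [x' [y' [_ _ ->]]]]] := cp_span cc (memvf x) (memvf y).
  by exists n, a, x', y'.
Qed.
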